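(* For every $n \ge 1$, $B^-_n(x) = x^n B^+_n(1/x)$.
   Context: A signed permutation of $[n]$ is a set $S = \{a_1, \dots, a_n\}$ with $a_i \in \{i, -i\}$, together with a bijection $w : S \to S$, written as the word $w(a_1) \cdots w(a_n)$. An index $i \in \{0, \dots, n-1\}$ is a $B$-descent if $w(a_i) > w(a_{i+1})$ in $\mathbb{Z}$, with the convention $w(a_0) = 0$; $\mathrm{des}_B(w)$ is the number of $B$-descents. $B^+_n(x)$ (resp. $B^-_n(x)$) is $\sum x^{\mathrm{des}_B(w)}$ over all signed permutations of $[n]$ with $w(a_n) > 0$ (resp. $w(a_n) < 0$). *)

From HB Require Import structures.
From mathcomp Require Import all_boot all_order all_algebra all_fingroup.
Set Implicit Arguments. Unset Strict Implicit. Unset Printing Implicit Defensive.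
Import Order.TTheory GRing.Theory Num.Theory.
Local Open Scope ring_scope.

(* A signed permutation of [n] is encoded (0-based) by
   - s : {ffun 'I_n -> bool}: the choice of S = {a_1,..,a_n}, with
         a_{j+1} = -(j+1) if s j, and a_{j+1} = j+1 otherwise;
   - p : 'S_n : the bijection w : S -> S, via w(a_{i+1}) = a_{p i + 1}. *)

Definition sgelt (n : nat) (s : {ffun 'I_n -> bool}) (j : 'I_n) : int :=
  (-1) ^+ (s j) * (nat_of_ord j).+1%:Z.

Definition sword (n : nat) (s : {ffun 'I_n -> bool}) (p : 'S_n) (i : 'I_n) : int :=
  sgelt s (p i).

(* extended word: wext 0 = 0 (convention w(a_0) = 0), wext k = w(a_k) for 1 <= k <= n *)
Definition wext (n : nat) (s : {ffun 'I_n -> bool}) (p : 'S_n) (k : nat) : int :=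
  match k with
  | 0%N => 0
  | k'.+1 => match insub k' with Some i => sword s p i | None => 0 end
  end.

Definition desB (n : nat) (s : {ffun 'I_n -> bool}) (p : 'S_n) : nat :=
  (\sum_(i < n) (wext s p i.+1 < wext s p i)%R)%N.

Definition Bplus (R : ringType) (n : nat) (x : R) : R :=
  \sum_(s : {ffun 'I_n -> bool}) \sum_(p : 'S_n)
     (if (0 < wext s p n)%R then x ^+ desB s p else 0).

Definition Bminus (R : ringType) (n : nat) (x : R) : R :=
  \sum_(s : {ffun 'I_n -> bool}) \sum_(p : 'S_n)
     (if (wext s p n < 0)%R then x ^+ desB s p else 0).

From HB Require Import structures.
From mathcomp Require Import all_boot all_order all_algebra all_fingroup zify.
Import Order.TTheory GRing.Theory Num.Theory.
Local Open Scope ring_scope.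
Set Implicit Arguments. Unset Strict Implicit.

(* Flipping every sign choice, s |-> ~~ s, replaces the set
   S = {a_1,..,a_n} by -S and turns the word w into -w.  Hence
   - the sign of w(a_n) is reversed, so the flip is a bijection between the
     signed permutations counted by B^+_n and those counted by B^-_n;
   - every comparison w(a_i) > w(a_{i+1}) (i = 0..n-1, with w(a_0) = 0) is
     reversed.  Consecutive entries of the extended word 0, w(a_1), .., w(a_n)
     are never equal (w(a_1) != 0, and w is injective), so each index i is a
     B-descent of exactly one of w and -w, i.e. des_B(-w) + des_B(w) = n.
   Reindexing B^-_n(x) along the flip then gives
     B^-_n(x) = sum x^(n - des_B w) = x^n * sum (1/x)^(des_B w) = x^n B^+_n(1/x). *)

Definition negs n (s : {ffun 'I_n -> bool}) : {ffun 'I_n -> bool} :=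
  [ffun j => ~~ s j].

Lemma negsK n : involutive (@negs n).
Proof. by move=> s; apply/ffunP=> j; rewrite !ffunE negbK. Qed.

Lemma sgelt_negs n (s : {ffun 'I_n -> bool}) (j : 'I_n) :
  sgelt (negs s) j = - sgelt s j.
Proof.
by rewrite /sgelt ffunE; case: (s j); rewrite /= ?expr0 ?expr1 ?mulN1r ?mul1r ?opprK.
Qed.

Lemma sgelt_neq0 n (s : {ffun 'I_n -> bool}) (j : 'I_n) : sgelt s j != 0.
Proof. by rewrite /sgelt; case: (s j); rewrite /= ?expr0 ?expr1 ?mulN1r ?mul1r; lia. Qed.

Lemma sgelt_inj n (s : {ffun 'I_n -> bool}) : injective (sgelt s).
Proof.
move=> j k; rewrite /sgelt; case: (s j); case: (s k);
  rewrite /= ?expr0 ?expr1 ?mulN1r ?mul1r => Ejk; apply/val_inj => /=; lia.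
Qed.

Lemma sword_inj n (s : {ffun 'I_n -> bool}) (p : 'S_n) : injective (sword s p).
Proof. by move=> i j /sgelt_inj /perm_inj. Qed.

Lemma wext_negs n (s : {ffun 'I_n -> bool}) (p : 'S_n) (k : nat) :
  wext (negs s) p k = - wext s p k.
Proof.
case: k => [|k] /=; first by rewrite oppr0.
by case: insubP => [i _ _|_]; rewrite ?oppr0 // /sword sgelt_negs.
Qed.

Lemma wextS n (s : {ffun 'I_n -> bool}) (p : 'S_n) (i : 'I_n) :
  wext s p i.+1 = sword s p i.
Proof. by rewrite /= valK. Qed.

(* Consecutive entries of the extended word 0, w(a_1), .., w(a_n) differ,
   so every index is either a descent or an ascent. *)
Lemma wext_succ_neq n (s : {ffun 'I_n -> bool}) (p : 'S_n) (i : 'I_n) :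
  wext s p i != wext s p i.+1.
Proof.
rewrite wextS; case Ei: (nat_of_ord i) => [|k] /=.
  by rewrite eq_sym sgelt_neq0.
have k_lt_n : (k < n)%N by have := ltn_ord i; rewrite Ei; lia.
rewrite (insubT (fun m => m < n)%N k_lt_n).
apply/negP => /eqP /sword_inj /(congr1 val) /= Eik.
by move: Ei; rewrite -Eik; lia.
Qed.

(* Complementarity: each index is a B-descent of exactly one of w and -w. *)
Lemma desB_negs n (s : {ffun 'I_n -> bool}) (p : 'S_n) :
  (desB (negs s) p + desB s p = n)%N.
Proof.
rewrite /desB -big_split -[n in RHS]card_ord -sum1_card.
apply: eq_bigr => i _; rewrite !wext_negs ltrN2.
by have := wext_succ_neq s p i; case: ltgtP.
Qed.

(* In a field, x^a = x^(a + b) * (1/x)^b: trading descents of -w for ascents of w. *)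
Lemma expr_split (R : fieldType) (x : R) (a b : nat) :
  x != 0 -> x ^+ a = x ^+ (a + b) * x^-1 ^+ b.
Proof. by move=> x0; rewrite exprD exprVn mulrK // unitfE expf_neq0. Qed.

Theorem lemma7p1 (R : fieldType) (n : nat) (x : R) :
  (1 <= n)%N -> x != 0 -> Bminus n x = x ^+ n * Bplus n x^-1.
Proof.
move=> _ x0; rewrite /Bminus /Bplus mulr_sumr.
rewrite (reindex_inj (inv_inj (@negsK n))) /=.
apply: eq_bigr => s _; rewrite mulr_sumr; apply: eq_bigr => p _.
rewrite wext_negs oppr_lt0; case: ifP => _; last by rewrite mulr0.
by rewrite (expr_split (desB (negs s) p) (desB s p) x0) desB_negs.
Qed.
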